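(* (a) ${\mathrm{stick}}\leq{\mathrm{stick}}'$. (b) If ${\mathrm{stick}}<\aleph_{\omega_1}$ then ${\mathrm{stick}}={\mathrm{stick}}'$; in particular then ${\mathrm{stick}}''\leq{\mathrm{stick}}$. (c) If $\lambda\leq\lambda'$ are cardinals then ${\mathrm{stick}}_\lambda\leq{\mathrm{stick}}_{\lambda'}$. (d) ${\mathrm{stick}}\leq{\mathrm{stick}}_{{\mathrm{stick}}}\leq{\mathrm{stick}}'$.
   Context: ${\mathrm{stick}}$ is the least cardinality of $X\subseteq[\omega_1]^{\aleph_0}$ such that every $y\in[\omega_1]^{\aleph_1}$ has a subset in $X$. ${\mathrm{stick}}'$ is the least cardinal $\kappa\geq\aleph_1$ for which there is $X\subseteq[\kappa]^{\aleph_0}$ with $|X|=\kappa$ such that every $y\in[\kappa]^{\aleph_1}$ has a subset in $X$. ${\mathrm{stick}}''$ is the least cardinal $\kappa\geq\aleph_1$ for which there is $X\subseteq[\kappa]^{\aleph_0}$ with $|X|=\kappa$ such that every $y\in[\kappa]^{\kappa}$ has a subset in $X$. For an (uncountable) cardinal $\lambda$, ${\mathrm{stick}}_\lambda$ is the least cardinality of $X\subseteq[\lambda]^{\aleph_0}$ such that every $y\in[\lambda]^{\aleph_1}$ has a subset in $X$. *)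

(* Cardinal combinatorics in type theory: a cardinal is
   represented by a type, comparison of cardinals by injections/bijections,
   subsets of a type T by predicates T -> Prop. *)
From Stdlib Require Import Classical.

Definition lecard (A B : Type) : Prop := exists f : A -> B, forall x y, f x = f y -> x = y.

Definition eqcard (A B : Type) : Prop :=
  exists f : A -> B, (forall x y, f x = f y -> x = y) /\ (forall b, exists a, f a = b).

Definition elt {T : Type} (Y : T -> Prop) : Type := {x : T | Y x}.

Definition ctbl_inf {T : Type} (Y : T -> Prop) : Prop := eqcard (elt Y) nat.

Definition incl {T : Type} (x y : T -> Prop) : Prop := forall a, x a -> y a.

(* (W, R) is (order-isomorphic to) omega_1: a strict well-order which is
   uncountable and all of whose proper initial segments are countable. *)
Definition is_omega1 (W : Type) (R : W -> W -> Prop) : Prop :=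
  well_founded R /\
  (forall a b c, R a b -> R b c -> R a c) /\
  (forall a b, R a b \/ a = b \/ R b a) /\
  ~ lecard W nat /\
  (forall w, lecard {v : W | R v w} nat).

Definition stick_family (K C : Type) (X : (K -> Prop) -> Prop) : Prop :=
  (forall x, X x -> ctbl_inf x) /\
  (forall y : K -> Prop, eqcard (elt y) C -> exists x, X x /\ incl x y).

(* S represents stick_lambda, where L represents lambda (uncountable) and
   W represents omega_1 (so |W| = aleph_1): the least cardinality of a
   family X \subseteq [L]^{aleph_0} such that every y \in [L]^{aleph_1}
   has a subset in X. *)
Definition is_stick_lam (W L S : Type) : Prop :=
  ~ lecard L nat /\
  (exists X, stick_family L W X /\ eqcard (elt X) S) /\
  (forall X, stick_family L W X -> lecard S (elt X)).

Definition is_stick (W S : Type) : Prop := is_stick_lam W W S.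

(* P represents stick': least kappa >= aleph_1 carrying X \subseteq
   [kappa]^{aleph_0} with |X| = kappa such that every y in [kappa]^{aleph_1}
   has a subset in X. *)
Definition is_stick' (W P : Type) : Prop :=
  (lecard W P /\ exists X, stick_family P W X /\ eqcard (elt X) P) /\
  (forall (K : Type) (X : (K -> Prop) -> Prop),
      lecard W K -> stick_family K W X -> eqcard (elt X) K -> lecard P K).

(* P represents stick'': as stick', but every y in [kappa]^kappa must have a
   subset in X. *)
Definition is_stick'' (W P : Type) : Prop :=
  (lecard W P /\ exists X, stick_family P P X /\ eqcard (elt X) P) /\
  (forall (K : Type) (X : (K -> Prop) -> Prop),
      lecard W K -> stick_family K K X -> eqcard (elt X) K -> lecard P K).

(* |S| < aleph_{omega_1}: the infinite cardinals <= |S| form a countable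
   collection, i.e. countably many subsets of S represent every infinite
   cardinality <= |S|.  (For infinite |S| = aleph_alpha this says alpha+1 is
   countable, i.e. alpha < omega_1; finite |S| trivially qualifies.) *)
Definition below_aleph_omega1 (S : Type) : Prop :=
  exists seq : nat -> (S -> Prop),
    forall Y : S -> Prop, lecard nat (elt Y) -> exists n, eqcard (elt Y) (elt (seq n)).

(* Stick families pull back along injections without growing; this gives the monotonicity
   statements (a), (c) and (d), once stick >= aleph_1 is known.

   For (b), let kappa = stick and well-order kappa.  By induction, every initial segment K of
   kappa, and kappa itself, carries a stick family of size <= kappa.  If every aleph_1-subset of K
   meets some proper initial segment in an uncountable set, the union of the families of the
   proper initial segments works; it has size <= kappa * kappa = kappa by Hessenberg's theorem.
   Otherwise some aleph_1-subset of K is cofinal in K with countable proper initial parts.  As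
   kappa < aleph_{omega_1}, the initial segments take only countably many sizes, so uncountably
   many of these cofinal points have initial segments of one size mu, and |K| <= aleph_1 * mu:
   K injects into omega_1 or into one of its proper initial segments.  Hence kappa carries a
   stick family of size kappa, a witness for stick' and, since it catches every kappa-subset
   too, for stick''. *)

From Stdlib Require Import Cantor Classical ClassicalEpsilon.
From Stdlib Require Import FunctionalExtensionality ProofIrrelevance.
From mathcomp Require Import ssreflect ssrfun ssrbool.
From mathcomp Require eqtype boolp wochoice classical_sets cardinality.

(** * Comparing cardinalities *)

Lemma sig_eq {A : Type} {P : A -> Prop} (u v : {x | P x}) :
  proj1_sig u = proj1_sig v -> u = v.
Proof. by case: u v => [x p] [y q] /=; apply: subset_eq_compat. Qed.

Lemma lecard_refl (A : Type) : lecard A A.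
Proof. by exists id. Qed.

Lemma lecard_trans {A B C : Type} : lecard A B -> lecard B C -> lecard A C.
Proof. by move=> [f f_inj] [g g_inj]; exists (g \o f) => x y /g_inj /f_inj. Qed.

Lemma eqcard_lecard {A B : Type} : eqcard A B -> lecard A B.
Proof. by move=> [f [f_inj _]]; exists f. Qed.

Lemma eqcard_trans {A B C : Type} : eqcard A B -> eqcard B C -> eqcard A C.
Proof.
move=> [f [f_inj f_surj]] [g [g_inj g_surj]]; exists (g \o f); split.
  by move=> x y /g_inj /f_inj.
by move=> c; have [b <-] := g_surj c; have [a <-] := f_surj b; exists a.
Qed.

Lemma eqcard_sym {A B : Type} : eqcard A B -> eqcard B A.
Proof.
move=> [f [f_inj f_surj]]; have [g gK] := choice _ f_surj.
exists g; split; last by move=> a; exists (f a); apply: f_inj.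
by move=> x y E; rewrite -(gK x) -(gK y) E.
Qed.

Lemma lecard_rel {A B : Type} (Rl : A -> B -> Prop) :
  (forall a, exists b, Rl a b) -> (forall a a' b, Rl a b -> Rl a' b -> a = a') ->
  lecard A B.
Proof.
move=> Rl_total Rl_inj; have [f Rf] := choice _ Rl_total.
by exists f => x y E; apply: (Rl_inj x y (f x)); rewrite // E.
Qed.

Lemma lecard_elt {K : Type} (x : K -> Prop) : lecard (elt x) K.
Proof. by exists (@proj1_sig _ _) => u v; apply: sig_eq. Qed.

Lemma lecard_incl {K : Type} (x y : K -> Prop) : incl x y -> lecard (elt x) (elt y).
Proof.
move=> xy; exists (fun u => exist y (proj1_sig u) (xy _ (proj2_sig u))).
by move=> u v [] /sig_eq.
Qed.

Lemma lecard_on {K B : Type} (P : K -> Prop) (b0 : B) :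
  lecard (elt P) B -> exists f : K -> B, forall a b, P a -> P b -> f a = f b -> a = b.
Proof.
move=> [g g_inj].
exists (fun k => if excluded_middle_informative (P k) is left h then g (exist _ k h) else b0).
move=> a b Pa Pb.
case: excluded_middle_informative => [ha|//]; case: excluded_middle_informative => [hb|//].
by move=> /g_inj [].
Qed.

Lemma lecard_prod {A A' B B' : Type} :
  lecard A A' -> lecard B B' -> lecard (A * B) (A' * B').
Proof.
move=> [f f_inj] [g g_inj]; exists (fun p => (f p.1, g p.2)).
by move=> [a b] [c d] [/f_inj -> /g_inj ->].
Qed.

Lemma lecard_sum {A A' B B' : Type} :
  lecard A A' -> lecard B B' -> lecard (A + B) (A' + B').
Proof.
move=> [f f_inj] [g g_inj].
exists (fun s => match s with inl a => inl (f a) | inr b => inr (g b) end).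
by move=> [a|b] [c|d] //= [] => [/f_inj|/g_inj] ->.
Qed.

Lemma lecard_nat_prod : lecard (nat * nat) nat.
Proof.
by exists Cantor.to_nat => x y E; rewrite -(Cantor.cancel_of_to x) E Cantor.cancel_of_to.
Qed.

Lemma lecard_nat_sum : lecard (nat + nat) nat.
Proof.
apply: lecard_trans lecard_nat_prod.
exists (fun s => match s with inl a => (0, a) | inr b => (1, b) end).
by move=> [a|b] [c|d] // [->].
Qed.

Lemma lecard_option_nat {A : Type} : lecard A nat -> lecard (option A) nat.
Proof.
move=> [f f_inj]; exists (fun o => if o is Some a then S (f a) else 0).
by move=> [a|] [b|] // [/f_inj ->].
Qed.

Section SetTheory.
Import eqtype boolp classical_sets cardinality.
Local Open Scope classical_set_scope.
Local Open Scope card_scope.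

Let card_setT_le (A B : Type) : lecard A B -> [set: A] #<= [set: B].
Proof.
move=> [f f_inj]; apply: (card_le_trans (B := f @` setT)); last exact: subset_card_le.
have : f @` setT #= [set: A] by apply: inj_card_eq => x y _ _; exact: f_inj.
by rewrite card_eq_sym card_eq_le => /andP[].
Qed.

Let eqcard_card_eqT (A B : Type) : [set: A] #= [set: B] -> eqcard A B.
Proof.
move=> /card_bijP[f [g fK gK]].
pose inT (T : Type) (x : T) : [set: T] := SigSub (mem_set (I : setT x)).
have inTK T (u : [set: T]) : inT T (sval u) = u by apply: val_inj.
exists (fun a => sval (f (inT A a))); split.
- by move=> x y /val_inj /(can_inj fK) /(congr1 sval).
- by move=> b; exists (sval (g (inT B b))); rewrite inTK gK.
Qed.

Lemma schroeder_bernstein {A B : Type} : lecard A B -> lecard B A -> eqcard A B.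
Proof.
by move=> AB BA; apply/eqcard_card_eqT/Cantor_Bernstein; apply: card_setT_le.
Qed.

Lemma zorn_preorder {T : Type} (le : T -> T -> Prop) (t0 : T) :
  (forall t, le t t) -> (forall r s t, le r s -> le s t -> le r t) ->
  (forall C : T -> Prop, (forall a b, C a -> C b -> le a b \/ le b a) ->
     exists u, forall a, C a -> le a u) ->
  exists m, forall a, le m a -> le a m.
Proof.
move=> le_refl le_trans chain_ub.
have [|||m m_max] := @ZL_preorder T t0 (fun a b => `[< le a b >]).
- by move=> t; apply/asboolP.
- by move=> r s t /asboolP rs /asboolP st; apply/asboolP; apply: le_trans st.
- move=> C C_tot; have [|u Cu] := chain_ub C.
    by move=> a b Ca Cb; case: (C_tot a b Ca Cb) => /asboolP; auto.
  by exists u => a /Cu /asboolP.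
- by exists m => a /asboolP /m_max /asboolP.
Qed.

Lemma well_ordering (T : Type) : exists lt : T -> T -> Prop,
  [/\ well_founded lt, forall a b c, lt a b -> lt b c -> lt a c
    & forall a b, lt a b \/ a = b \/ lt b a].
Proof.
elim/Peq: T => T; have [R R_wo] := wochoice.well_ordering_principle T.
pose pred_of (P : T -> Prop) := fun x => `[< P x >].
have R_min (P : T -> Prop) x0 : P x0 ->
    exists z, [/\ P z, forall x, P x -> R z x
                 & forall z', P z' -> (forall x, P x -> R z' x) -> z' = z].
  move=> Px0; have [|z [[Pz z_min] z_uniq]] := R_wo (pred_of P).
    by exists x0; rewrite unfold_in; apply/asboolP.
  move: Pz; rewrite unfold_in => /asboolP Pz; exists z; split=> // [x Px|z' Pz' z'_min].
    by apply: z_min; rewrite unfold_in; apply/asboolP.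
  by apply/esym/z_uniq; split=> [|x]; rewrite unfold_in; [apply/asboolP|move=> /asboolP]; auto.
have R_refl x : R x x.
  by have [z [-> z_min _]] := R_min (fun a => a = x) x erefl; apply: z_min.
have R_anti x y : R x y -> R y x -> x = y.
  move=> Rxy Ryx; have [z [_ _ z_uniq]] := R_min (fun a => a = x \/ a = y) x (or_introl erefl).
  have zx : x = z by apply: z_uniq => [|a [->|->]]; auto.
  have zy : y = z by apply: z_uniq => [|a [->|->]]; auto.
  by rewrite zx zy.
have R_total x y : R x y \/ R y x.
  have [z [[->|->] z_min _]] := R_min (fun a => a = x \/ a = y) x (or_introl erefl).
    by left; apply: z_min; right.
  by right; apply: z_min; left.
exists (fun a b => R a b /\ a <> b); split.
- move=> a; apply: NNPP => a_acc.
  have [z [z_acc z_min _]] := R_min (fun a => ~ Acc (fun a b => R a b /\ a <> b) a) a a_acc.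
  apply: z_acc; constructor=> y [Ryz yz]; apply: NNPP => y_acc.
  by apply: yz; apply: R_anti Ryz (z_min y y_acc).
- move=> a b c [Rab ab] [Rbc bc].
  have [z [Hz z_min _]] := R_min (fun x => x = a \/ x = b \/ x = c) a (or_introl erefl).
  suff Rac : R a c by split=> // ac; subst c; apply: ab; apply: R_anti.
  case: Hz => [|[|]] ?; subst z.
  + by apply: z_min; right; right.
  + by rewrite (R_anti a b Rab (z_min a (or_introl erefl))).
  + have cb : c = b by apply: R_anti _ _ (z_min b (or_intror (or_introl erefl))) Rbc.
    by subst c; rewrite (R_anti a b Rab (z_min a (or_introl erefl))).
- move=> a b; case: (Classical_Prop.classic (a = b)) => [->|ab]; first by right; left.
  by case: (R_total a b) => ?; [left|right; right]; split=> // ba; apply: ab.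
Qed.
End SetTheory.

Definition partial_injection {A B : Type} (G : A -> B -> Prop) :=
  (forall a b b', G a b -> G a b' -> b = b') /\ (forall a a' b, G a b -> G a' b -> a = a').

Lemma lecard_total (A B : Type) : lecard A B \/ lecard B A.
Proof.
pose le (G H : {G : A -> B -> Prop | partial_injection G}) :=
  forall a b, sval G a b -> sval H a b.
have pinj0 : @partial_injection A B (fun _ _ => False) by [].
have [|||[G [G_fun G_inj]] /= G_max] := zorn_preorder le (exist _ _ pinj0).
- by move=> G.
- by move=> G H K GH HK a b /GH /HK.
- move=> C C_tot; pose U a b := exists G, C G /\ sval G a b.
  suff pinjU : partial_injection U by exists (exist _ U pinjU) => G CG a b Gab; exists G.
  split=> [a b b'|a a' b] [G [CG Gab]] [H [CH Hab]].
  + by case: (C_tot G H CG CH) => [/(_ _ _ Gab) {}Gab|/(_ _ _ Hab) {}Hab];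
       [apply: (proj1 (proj2_sig H)) Gab Hab | apply: (proj1 (proj2_sig G)) Gab Hab].
  + by case: (C_tot G H CG CH) => [/(_ _ _ Gab) {}Gab|/(_ _ _ Hab) {}Hab];
       [apply: (proj2 (proj2_sig H)) Gab Hab | apply: (proj2 (proj2_sig G)) Gab Hab].
case: (classic (forall a, exists b, G a b)) => [G_tot|/not_all_ex_not [a0 a0_free]].
  by left; apply: lecard_rel G_tot G_inj.
case: (classic (forall b, exists a, G a b)) => [G_onto|/not_all_ex_not [b0 b0_free]].
  by right; apply: lecard_rel G_onto (fun b b' a => G_fun a b b').
pose G' a b := G a b \/ (a = a0 /\ b = b0).
have pinjG' : partial_injection G'.
  split=> [a b b'|a a' b] [Gab|[? ?]] [Gab'|[? ?]]; subst; by [eauto | exfalso; eauto].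
by exfalso; apply: a0_free; exists b0; apply: (G_max (exist _ G' pinjG')) => [a b|]; [left|right].
Qed.

(** * Hessenberg's theorem *)

Lemma lecard_cover {K : Type} (Y P Q : K -> Prop) :
  (forall k, Y k -> P k \/ Q k) -> lecard (elt Y) (elt P + elt Q).
Proof.
move=> YPQ; apply: (lecard_rel (fun u s =>
  match s with inl v => proj1_sig v = proj1_sig u | inr v => proj1_sig v = proj1_sig u end)).
  move=> [k Yk]; case: (YPQ k Yk) => [Pk|Qk].
    by exists (inl (exist _ k Pk)).
  by exists (inr (exist _ k Qk)).
by move=> u u' [v|v] E1 E2; apply: sig_eq; rewrite -E1 -E2.
Qed.

Lemma lecard_all (K : Type) : lecard K (elt (fun _ : K => True)).
Proof. by exists (fun k => exist _ k I) => x y []. Qed.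

Lemma lecard_range {Q K : Type} (phi : Q -> K) : lecard (elt (fun k => exists q, phi q = k)) Q.
Proof.
apply: (lecard_rel (fun u q => phi q = proj1_sig u)); first by move=> [k [q E]]; exists q.
by move=> u u' q E1 E2; apply: sig_eq; rewrite -E1 -E2.
Qed.

Lemma lecard_sum_prod {A B : Type} : lecard bool B -> lecard (A + A) (A * B).
Proof.
move=> [e e_inj]; exists (fun s => match s with inl a => (a, e true) | inr a => (a, e false) end).
by move=> [a|a] [a'|a'] [] -> // /e_inj.
Qed.

Lemma lecard_bool_nat {K : Type} : lecard nat K -> lecard bool K.
Proof. by apply: lecard_trans; exists (fun b : bool => if b then 0 else 1) => [[] []]. Qed.

Section Hessenberg.
Variable A : Type.
Hypothesis nat_A : lecard nat A.

(* Injections [B * B -> B] with [B] an infinite subset of [A], kept as graphs so that the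
   union of a chain is an upper bound. *)
Record sq_emb := SqEmb {
  sq_dom : A -> Prop;
  sq_graph : A -> A -> A -> Prop;
  sq_dom_infinite : lecard nat (elt sq_dom);
  sq_total : forall a b, sq_dom a -> sq_dom b -> exists c, sq_graph a b c;
  sq_range : forall a b c, sq_graph a b c -> [/\ sq_dom a, sq_dom b & sq_dom c];
  sq_functional : forall a b c c', sq_graph a b c -> sq_graph a b c' -> c = c';
  sq_injective : forall a b a' b' c, sq_graph a b c -> sq_graph a' b' c -> a = a' /\ b = b'
}.

Definition sq_le (p q : sq_emb) :=
  (forall a, sq_dom p a -> sq_dom q a) /\ (forall a b c, sq_graph p a b c -> sq_graph q a b c).

Lemma sq_le_refl (p : sq_emb) : sq_le p p.
Proof. by []. Qed.

Lemma sq_le_trans (p q r : sq_emb) : sq_le p q -> sq_le q r -> sq_le p r.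
Proof. by move=> [pq1 pq2] [qr1 qr2]; split=> [a /pq1 /qr1|a b c /pq2 /qr2]. Qed.

Lemma sq_emb_lecard (p : sq_emb) :
  lecard (elt (sq_dom p) * elt (sq_dom p)) (elt (sq_dom p)).
Proof.
apply: (lecard_rel (fun u w => sq_graph p (proj1_sig u.1) (proj1_sig u.2) (proj1_sig w))).
  move=> [[a Ba] [b Bb]] /=; have [c Gc] := sq_total p a b Ba Bb.
  by have [_ _ Bc] := sq_range p a b c Gc; exists (exist _ c Bc).
move=> [u v] [u' v'] w /= G1 G2.
by have [/sig_eq -> /sig_eq ->] := sq_injective p _ _ _ _ _ G1 G2.
Qed.

Lemma sq_emb0 : sq_emb.
Proof.
have [e e_inj] := constructive_indefinite_description _ nat_A.
pose G0 a b c := exists n m, [/\ a = e n, b = e m & c = e (Cantor.to_nat (n, m))].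
refine (@SqEmb (fun a => exists n, a = e n) G0 _ _ _ _ _).
- by exists (fun n => exist _ (e n) (ex_intro _ n erefl)) => n m [/e_inj].
- by move=> a b [n ->] [m ->]; exists (e (Cantor.to_nat (n, m))), n, m.
- by move=> a b c [n [m [-> -> ->]]]; split; eexists.
- by move=> a b c c' [n [m [-> -> ->]]] [n' [m' [/e_inj <- /e_inj <- ->]]].
- move=> a b a' b' c [n [m [-> -> ->]]] [n' [m' [-> -> /e_inj E]]].
  have [-> ->] : (n, m) = (n', m').
    by rewrite -(Cantor.cancel_of_to (n, m)) E Cantor.cancel_of_to.
  by [].
Qed.

Lemma sq_chain_ub (C : sq_emb -> Prop) :
  (forall p q, C p -> C q -> sq_le p q \/ sq_le q p) ->
  exists u, forall p, C p -> sq_le p u.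
Proof.
move=> C_tot; case: (classic (exists p0, C p0)) => [[p0 Cp0]|C0]; last first.
  by exists sq_emb0 => p Cp; case: C0; exists p.
have join p q : C p -> C q -> exists2 r, C r & sq_le p r /\ sq_le q r.
  move=> Cp Cq.
  by case: (C_tot p q Cp Cq) => le_pq; [exists q | exists p] => //; split=> //; apply: sq_le_refl.
pose UB a := exists p, C p /\ sq_dom p a.
pose UG a b c := exists p, C p /\ sq_graph p a b c.
have U_inf : lecard nat (elt UB).
  apply: lecard_trans (sq_dom_infinite p0) _.
  apply: (lecard_rel (fun u v => proj1_sig v = proj1_sig u)) => [[a Ba]|u u' v E1 E2].
    by exists (exist UB a (ex_intro _ p0 (conj Cp0 Ba))).
  by apply: sig_eq; rewrite -E1 -E2.
have U_total a b : UB a -> UB b -> exists c, UG a b c.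
  move=> [p [Cp Ba]] [q [Cq Bb]]; have [r Cr [[le_pr _] [le_qr _]]] := join p q Cp Cq.
  by have [c Gc] := sq_total r a b (le_pr _ Ba) (le_qr _ Bb); exists c, r.
have U_range a b c : UG a b c -> [/\ UB a, UB b & UB c].
  by move=> [p [Cp /(sq_range p) [Ba Bb Bc]]]; split; exists p.
have U_fun a b c c' : UG a b c -> UG a b c' -> c = c'.
  move=> [p [Cp G1]] [q [Cq G2]]; have [r Cr [[_ le_pr] [_ le_qr]]] := join p q Cp Cq.
  exact: sq_functional r a b c c' (le_pr _ _ _ G1) (le_qr _ _ _ G2).
have U_inj a b a' b' c : UG a b c -> UG a' b' c -> a = a' /\ b = b'.
  move=> [p [Cp G1]] [q [Cq G2]]; have [r Cr [[_ le_pr] [_ le_qr]]] := join p q Cp Cq.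
  exact: sq_injective r a b a' b' c (le_pr _ _ _ G1) (le_qr _ _ _ G2).
exists (SqEmb UB UG U_inf U_total U_range U_fun U_inj) => p Cp.
by split=> /= [a|a b c] ?; exists p.
Qed.

Lemma sq_emb_adjoin (p : sq_emb) (C : A -> Prop) (J : A * A -> A) :
  let B' a := sq_dom p a \/ C a in
  (forall a, C a -> ~ sq_dom p a) ->
  (forall a b, B' a -> B' b -> C (J (a, b))) ->
  (forall x y, B' x.1 /\ B' x.2 -> B' y.1 /\ B' y.2 -> J x = J y -> x = y) ->
  exists q, sq_le p q /\ incl C (sq_dom q).
Proof.
move=> B' C_notB J_C J_inj; pose B := sq_dom p.
pose G' a b c := sq_graph p a b c \/ [/\ B' a, B' b, ~ (B a /\ B b) & c = J (a, b)].
have G'_inf : lecard nat (elt B').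
  by apply: lecard_trans (sq_dom_infinite p) (lecard_incl _ _ _) => a; left.
have G'_total a b : B' a -> B' b -> exists c, G' a b c.
  move=> B'a B'b; case: (classic (B a /\ B b)) => [[Ba Bb]|notBB].
    by have [c Gc] := sq_total p a b Ba Bb; exists c; left.
  by eexists; right.
have G'_range a b c : G' a b c -> [/\ B' a, B' b & B' c].
  case=> [/(sq_range p) [Ba Bb Bc]|[B'a B'b _ ->]]; first by split; left.
  by split=> //; right; apply: J_C.
have G'_fun a b c c' : G' a b c -> G' a b c' -> c = c'.
  case=> [Gc|[_ _ notBB ->]] [Gc'|[_ _ notBB' ->]] //.
  - exact: sq_functional p a b c c' Gc Gc'.
  - by case: notBB'; have [] := sq_range p _ _ _ Gc.
  - by case: notBB; have [] := sq_range p _ _ _ Gc'.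
have G'_inj a b a' b' c : G' a b c -> G' a' b' c -> a = a' /\ b = b'.
  case=> [Gc|[B'a B'b _ ->]] [Gc'|[B'a' B'b' _ E]].
  - exact: sq_injective p a b a' b' c Gc Gc'.
  - by have [_ _ /C_notB] := sq_range p _ _ _ Gc; case; rewrite E; apply: J_C.
  - by have [_ _ /C_notB] := sq_range p _ _ _ Gc'; case; apply: J_C.
  - by have [-> ->] : (a, b) = (a', b') by apply: J_inj.
exists (SqEmb B' G' G'_inf G'_total G'_range G'_fun G'_inj); split.
  by split=> [a|a b c] /= H; left.
by move=> a Ca; right.
Qed.

(* A copy [C] of [B] outside [B] is large enough to receive all new pairs of [B \/ C]. *)
Lemma sq_emb_extend (p : sq_emb) :
  lecard (elt (sq_dom p)) (elt (fun a => ~ sq_dom p a)) ->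
  exists q, sq_le p q /\ exists a, sq_dom q a /\ ~ sq_dom p a.
Proof.
move=> [k k_inj]; pose B := sq_dom p; pose C a := exists u, proj1_sig (k u) = a.
pose B' a := B a \/ C a.
have C_notB a : C a -> ~ B a by move=> [u <-]; apply: (proj2_sig (k u)).
have B_C : lecard (elt B) (elt C).
  by exists (fun u => exist C _ (ex_intro _ u erefl)) => u v [/sig_eq /k_inj].
have B'_B : lecard (elt B') (elt B).
  apply: lecard_trans (lecard_cover B' B C (fun _ BC => BC)) _.
  apply: lecard_trans (lecard_sum (lecard_refl _) (lecard_range (fun u => proj1_sig (k u)))) _.
  apply: lecard_trans (lecard_sum_prod (lecard_bool_nat (sq_dom_infinite p))) _.
  exact: sq_emb_lecard.
have B'2_C : lecard (elt (fun x : A * A => B' x.1 /\ B' x.2)) (elt C).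
  apply: lecard_trans _ (lecard_trans (sq_emb_lecard p) B_C).
  apply: lecard_trans _ (lecard_prod B'_B B'_B).
  exists (fun x => (exist B' _ (proj1 (proj2_sig x)), exist B' _ (proj2 (proj2_sig x)))).
  by move=> [[a b] ?] [[a' b'] ?] [E1 E2]; apply: sig_eq; rewrite /= E1 E2.
have [b0 Bb0] : exists b, B b.
  by have [e _] := sq_dom_infinite p; exists (proj1_sig (e 0)); apply: proj2_sig.
have Cc0 : C (proj1_sig (k (exist B b0 Bb0))) by eexists.
have [J J_inj] := lecard_on (fun x : A * A => B' x.1 /\ B' x.2) (exist C _ Cc0) B'2_C.
have [||q [le_pq C_q]] := sq_emb_adjoin p C (fun x => proj1_sig (J x)) C_notB.
- by move=> a b _ _; apply: proj2_sig.
- by move=> x y B'x B'y /sig_eq; apply: J_inj.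
- exists q; split=> //; exists (proj1_sig (k (exist B b0 Bb0))).
  by split; [apply: C_q | apply: C_notB].
Qed.

Theorem hessenberg : lecard (A * A) A.
Proof.
have [|||m m_max] := zorn_preorder sq_le sq_emb0.
- exact: sq_le_refl.
- exact: sq_le_trans.
- exact: sq_chain_ub.
pose B := sq_dom m.
suff A_B : lecard A (elt B).
  exact: lecard_trans (lecard_prod A_B A_B) (lecard_trans (sq_emb_lecard m) (lecard_elt _)).
case: (lecard_total (elt (fun a => ~ B a)) (elt B)) => [notB_B|B_notB].
  apply: lecard_trans (lecard_all _) _.
  apply: lecard_trans (lecard_cover _ B (fun a => ~ B a) (fun a _ => classic (B a))) _.
  apply: lecard_trans (lecard_sum (lecard_refl _) notB_B) _.
  apply: lecard_trans (lecard_sum_prod (lecard_bool_nat (sq_dom_infinite m))) _.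
  exact: sq_emb_lecard.
have [q [le_mq [a [qa ma]]]] := sq_emb_extend m B_notB.
by case: ma; apply: (proj1 (m_max q le_mq)).
Qed.
End Hessenberg.

(** * omega_1 *)

Lemma lecard_nat_uncountable {K : Type} : ~ lecard K nat -> lecard nat K.
Proof. by case: (lecard_total nat K). Qed.

Lemma lecard_sum_infinite {K : Type} : lecard nat K -> lecard (K + K) K.
Proof.
move=> nat_K; apply: lecard_trans (hessenberg _ nat_K).
exact: lecard_sum_prod (lecard_bool_nat nat_K).
Qed.

Lemma uncountable_avoid {K Q : Type} (phi : Q -> K) :
  ~ lecard K nat -> lecard Q nat -> ~ lecard (elt (fun k => forall q, phi q <> k)) nat.
Proof.
move=> K_unc Q_cnt Y_cnt; apply: K_unc.
apply: lecard_trans (lecard_all _) _.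
apply: lecard_trans
  (lecard_cover _ (fun k => forall q, phi q <> k) (fun k => exists q, phi q = k) _) _.
  by move=> k _; case: (classic (exists q, phi q = k)) => [|/not_ex_all_not]; auto.
apply: lecard_trans (lecard_sum Y_cnt (lecard_trans (lecard_range phi) Q_cnt)) _.
exact: lecard_nat_sum.
Qed.

Lemma uncountable_inhabited {K : Type} (P : K -> Prop) :
  ~ lecard (elt P) nat -> exists k, P k.
Proof.
move=> P_unc; apply: NNPP => P0; apply: P_unc.
exists (fun u => match P0 (ex_intro _ _ (proj2_sig u)) with end) => u.
by case: P0; exists (proj1_sig u); apply: proj2_sig.
Qed.

Section Omega1.
Variables (W : Type) (R : W -> W -> Prop).
Hypothesis HW : is_omega1 W R.

Let R_wf : well_founded R. Proof. by case: HW. Qed.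
Let R_tri a b : R a b \/ a = b \/ R b a. Proof. by case: HW => _ [_ []]. Qed.
Let W_unc : ~ lecard W nat. Proof. by case: HW => _ [_ [_ []]]. Qed.
Let R_seg_cnt w : lecard {v | R v w} nat. Proof. by case: HW => _ [_ [_ []]]. Qed.

Lemma omega1_rec {A : Type} (P : forall w : W, (forall v, R v w -> A) -> A -> Prop) :
  (forall w h, exists a, P w h a) -> exists g : W -> A, forall w, P w (fun v _ => g v) (g w).
Proof.
move=> P_ex; have [F PF] := choice (fun (wh : {w : W & forall v, R v w -> A}) a =>
  P (projT1 wh) (projT2 wh) a) (fun wh => P_ex _ _).
pose g := Fix R_wf (fun _ => A) (fun w h => F (existT _ w h)).
exists g => w; rewrite /g Fix_eq; first exact: (PF (existT _ w _)).
move=> x h1 h2 h12; suff -> : h1 = h2 by [].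
by apply: functional_extensionality_dep => v; apply: functional_extensionality_dep.
Qed.

Lemma omega1_inj {A : Type} (g : W -> A) :
  (forall w v, R v w -> g v <> g w) -> forall a b, g a = g b -> a = b.
Proof.
move=> g_new a b gab; case: (R_tri a b) => [Rab|[//|Rba]]; exfalso.
  exact: g_new b a Rab gab.
exact: g_new a b Rba (esym gab).
Qed.

Lemma omega1_le_uncountable {Z : Type} : ~ lecard Z nat -> lecard W Z.
Proof.
move=> Z_unc.
have [|g g_new] := omega1_rec (A := Z) (fun w h z => forall v (p : R v w), h v p <> z).
  move=> w h; pose phi (u : {v | R v w}) := h (proj1_sig u) (proj2_sig u).
  have [z z_new] := uncountable_inhabited _ (uncountable_avoid phi Z_unc (R_seg_cnt w)).
  by exists z => v p; apply: (z_new (exist _ v p)).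
by exists g; apply: omega1_inj => w v; apply: g_new.
Qed.

Lemma omega1_eq_uncountable {Z : Type} : ~ lecard Z nat -> lecard Z W -> eqcard Z W.
Proof.
move=> Z_unc Z_W.
exact: (schroeder_bernstein Z_W (omega1_le_uncountable Z_unc)).
Qed.

Lemma lecard_nat_omega1 : lecard nat W.
Proof. exact: lecard_nat_uncountable W_unc. Qed.

Lemma omega1_prod_bound (I : Type) :
  lecard (W * (I + nat)) W \/ lecard (W * (I + nat)) I.
Proof.
case: (classic (lecard I nat)) => [I_cnt|I_unc].
  left; apply: lecard_trans _ (hessenberg _ lecard_nat_omega1).
  apply: lecard_prod (lecard_refl _) (lecard_trans _ lecard_nat_omega1).
  exact: lecard_trans (lecard_sum I_cnt (lecard_refl _)) lecard_nat_sum.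
right; have nat_I := lecard_nat_uncountable I_unc.
apply: lecard_trans _ (hessenberg _ nat_I).
apply: lecard_prod (omega1_le_uncountable I_unc) _.
exact: lecard_trans (lecard_sum (lecard_refl _) nat_I) (lecard_sum_infinite nat_I).
Qed.

(* Choose members of [X] recursively, each avoiding a chosen point of every earlier one. *)
Lemma stick_family_omega1_ge (X : (W -> Prop) -> Prop) :
  stick_family W W X -> lecard W (elt X).
Proof.
move=> [X_cnt X_stick].
have w0 : inhabited W.
  apply: NNPP => W0; apply: W_unc; exists (fun w => match W0 (inhabits w) with end) => w.
  by case: W0; exists.
pose pt := fun x : W -> Prop => epsilon w0 x.
have pt_in x : X x -> x (pt x).
  move=> Xx; apply: epsilon_spec; have [f [_ f_onto]] := X_cnt x Xx.
  by have [[a xa] _] := f_onto 0; exists a.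
have [|g g_new] := omega1_rec (A := W -> Prop) (fun w h x => X x /\
  incl x (fun a => forall u : {v | R v w}, pt (h (proj1_sig u) (proj2_sig u)) <> a)).
  move=> w h; apply: X_stick; apply: omega1_eq_uncountable; last exact: lecard_elt.
  pose phi (u : {v | R v w}) := pt (h (proj1_sig u) (proj2_sig u)).
  exact: uncountable_avoid phi W_unc (R_seg_cnt w).
have g_inj : forall a b, g a = g b -> a = b.
  apply: omega1_inj => w v Rvw gvw; have [Xv _] := g_new v; have [_ gw_new] := g_new w.
  have gw_pt : g w (pt (g v)) by rewrite -gvw; exact: pt_in.
  exact: gw_new _ gw_pt (exist _ v Rvw) erefl.
by exists (fun w => exist X (g w) (proj1 (g_new w))) => a b [/g_inj].
Qed.
End Omega1.

(** * Stick families *)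

Definition img {K K' : Type} (f : K -> K') (y : K -> Prop) : K' -> Prop :=
  fun k' => exists k, y k /\ f k = k'.

Definition restrict {K : Type} (P y : K -> Prop) : elt P -> Prop := fun u => y (proj1_sig u).

Definition lift {K : Type} {P : K -> Prop} (x : elt P -> Prop) : K -> Prop :=
  fun k => exists h : P k, x (exist P k h).

Lemma eqcard_img {K K' : Type} (f : K -> K') (y : K -> Prop) :
  (forall a b, f a = f b -> a = b) -> eqcard (elt y) (elt (img f y)).
Proof.
move=> f_inj; exists (fun u => exist (img f y) _ (ex_intro _ _ (conj (proj2_sig u) erefl))).
split; first by move=> u v [/f_inj /sig_eq].
by move=> [k' [k [yk E]]]; subst k'; exists (exist y k yk); apply: sig_eq.
Qed.

Lemma eqcard_preimage {K K' : Type} (f : K -> K') (x : K' -> Prop) :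
  (forall a b, f a = f b -> a = b) -> incl x (img f (fun _ => True)) ->
  eqcard (elt (fun k => x (f k))) (elt x).
Proof.
move=> f_inj x_f; exists (fun u => exist x (f (proj1_sig u)) (proj2_sig u)); split.
  by move=> u v [/f_inj /sig_eq].
by move=> [k' xk']; have [k [_ fk]] := x_f k' xk'; subst k'; exists (exist _ k xk'); apply: sig_eq.
Qed.

Lemma eqcard_lift {K : Type} {P : K -> Prop} (x : elt P -> Prop) :
  eqcard (elt x) (elt (lift x)).
Proof.
exists (fun u : elt x =>
  let: exist (exist k Pk) xk := u in exist (lift x) k (ex_intro _ Pk xk)).
split; first by move=> [[k Pk] xk] [[k' Pk'] xk'] /= [E]; subst k'; do 2!apply: sig_eq.
by move=> [k [Pk xk]]; exists (exist x (exist P k Pk) xk); apply: sig_eq.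
Qed.

Lemma stick_family_pullback {K K' C : Type} (f : K -> K') (X' : (K' -> Prop) -> Prop) :
  (forall a b, f a = f b -> a = b) -> stick_family K' C X' ->
  exists X, stick_family K C X /\ lecard (elt X) (elt X').
Proof.
move=> f_inj [X'_cnt X'_stick].
pose X x := exists x', [/\ X' x', incl x' (img f (fun _ => True)) & x = (fun k => x' (f k))].
exists X; split; first split.
- move=> x [x' [X'x' x'_f ->]].
  exact: eqcard_trans (eqcard_preimage f x' f_inj x'_f) (X'_cnt x' X'x').
- move=> y y_C; have [|x' [X'x' x'_y]] := X'_stick (img f y).
    exact: eqcard_trans (eqcard_sym (eqcard_img f y f_inj)) y_C.
  exists (fun k => x' (f k)); split.
    exists x'; split=> // k' /x'_y [k [_ fk]]; by exists k.
  by move=> k /x'_y [k0 [yk0 /f_inj <-]].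
- apply: (lecard_rel (fun u v => proj1_sig u = (fun k => proj1_sig v (f k)))).
    by move=> [x [x' [X'x' x'_f E]]]; exists (exist X' x' X'x').
  by move=> u u' v E1 E2; apply: sig_eq; rewrite E1 E2.
Qed.

Lemma stick_family_mono {K C C' : Type} (X : (K -> Prop) -> Prop) :
  lecard C C' -> stick_family K C X -> stick_family K C' X.
Proof.
move=> [h h_inj] [X_cnt X_stick]; split=> // y y_C'.
have [g [g_inj _]] := eqcard_sym y_C'.
pose y0 k := exists c, proj1_sig (g (h c)) = k.
have [|x [Xx x_y0]] := X_stick y0.
  apply: eqcard_sym; exists (fun c => exist y0 _ (ex_intro _ c erefl)); split.
    by move=> c c' [/sig_eq /g_inj /h_inj].
  by move=> [k [c E]]; subst k; exists c; apply: sig_eq.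
exists x; split=> // k /x_y0 [c <-]; exact: proj2_sig.
Qed.

Lemma stick_lam_le {W L S K : Type} (X : (K -> Prop) -> Prop) :
  is_stick_lam W L S -> lecard L K -> stick_family K W X -> lecard S (elt X).
Proof.
move=> [_ [_ S_min]] [f f_inj] X_stick.
have [X' [X'_stick X'_X]] := stick_family_pullback f X f_inj X_stick.
exact: lecard_trans (S_min X' X'_stick) X'_X.
Qed.

Definition cover_family {K I : Type} (P : I -> K -> Prop)
    (Fam : forall i, (elt (P i) -> Prop) -> Prop) : (K -> Prop) -> Prop :=
  fun x => exists i x', Fam i x' /\ x = lift x'.

Lemma stick_family_cover {K C I : Type} (P : I -> K -> Prop)
    (Fam : forall i, (elt (P i) -> Prop) -> Prop) :
  (forall i, stick_family (elt (P i)) C (Fam i)) ->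
  (forall y, eqcard (elt y) C -> exists i, eqcard (elt (restrict (P i) y)) C) ->
  stick_family K C (cover_family P Fam).
Proof.
move=> Fam_stick y_cover; split.
  move=> _ [i [x [Fx ->]]]; apply: eqcard_trans (eqcard_sym (eqcard_lift x)) _.
  exact: (proj1 (Fam_stick i)) x Fx.
move=> y /y_cover [i /(proj2 (Fam_stick i)) [x [Fx x_y]]].
by exists (lift x); split; [exists i, x | move=> k [Pk /x_y]].
Qed.

Lemma lecard_cover_family {K I S : Type} (P : I -> K -> Prop)
    (Fam : forall i, (elt (P i) -> Prop) -> Prop) :
  (forall i, lecard (elt (Fam i)) S) -> lecard (elt (cover_family P Fam)) (I * S).
Proof.
move=> Fam_S; pose g i := proj1_sig (constructive_indefinite_description _ (Fam_S i)).
have g_inj i : forall u v, g i u = g i v -> u = v.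
  exact: proj2_sig (constructive_indefinite_description _ (Fam_S i)).
apply: (lecard_rel (fun u p => exists i x (Fx : Fam i x),
  proj1_sig u = lift x /\ p = (i, g i (exist _ x Fx)))).
  by move=> [u [i [x [Fx E]]]]; exists (i, g i (exist _ x Fx)), i, x, Fx.
move=> u u' _ [i [x [Fx [ux ->]]]] [i' [x' [Fx' [ux' [E]]]]]; subst i'.
by move=> /g_inj [E']; subst x'; apply: sig_eq; rewrite ux ux'.
Qed.

Lemma lecard_restrict {K : Type} (P y : K -> Prop) : lecard (elt (restrict P y)) (elt y).
Proof.
exists (fun u : elt (restrict P y) => exist y (proj1_sig (proj1_sig u)) (proj2_sig u)).
by move=> [[k Pk] yk] [[k' Pk'] yk'] /= [E]; subst k'; do 2!apply: sig_eq.
Qed.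

Lemma uncountable_fiber {K : Type} (y : K -> Prop) (f : K -> nat) :
  ~ lecard (elt y) nat -> exists n, ~ lecard (elt (fun k => y k /\ f k = n)) nat.
Proof.
move=> y_unc; apply: NNPP => fibers_cnt; apply: y_unc.
have [g g_inj] := choice (fun n (g : K -> nat) =>
    forall a b, y a /\ f a = n -> y b /\ f b = n -> g a = g b -> a = b)
  (fun n => lecard_on _ 0 (NNPP _ (fun H => fibers_cnt (ex_intro _ n H)))).
apply: lecard_trans lecard_nat_prod.
exists (fun u => (f (proj1_sig u), g (f (proj1_sig u)) (proj1_sig u))).
move=> [a ya] [b yb] /= [fab gab]; apply: sig_eq.
by apply: (g_inj (f a)) => //; rewrite gab fab.
Qed.

(** * Stick families of size stick below aleph_omega_1 *)

Lemma lecard_indexed_cover {K I T : Type} (Z : I -> K -> Prop) (t0 : T) :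
  (forall k, exists i, Z i k) -> (forall i, lecard (elt (Z i)) T) -> lecard K (I * T).
Proof.
move=> Z_cover Z_T; have [c Zc] := choice _ Z_cover.
have [g g_inj] := choice _ (fun i => lecard_on (Z i) t0 (Z_T i)).
exists (fun k => (c k, g (c k) k)) => k k' [E gE].
by apply: (g_inj (c k)); [apply: Zc | rewrite E; apply: Zc | rewrite gE E].
Qed.

Section Core.
Variables (W : Type) (R : W -> W -> Prop) (S : Type).
Hypotheses (HW : is_omega1 W R) (W_S : lecard W S).

Definition stick_bounded (K : Type) := exists X, stick_family K W X /\ lecard (elt X) S.

Lemma stick_bounded_inj {K K' : Type} : lecard K K' -> stick_bounded K' -> stick_bounded K.
Proof.
move=> [f f_inj] [X' [X'_stick X'_S]].
have [X [X_stick X_X']] := stick_family_pullback f X' f_inj X'_stick.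
by exists X; split=> //; apply: lecard_trans X_X' X'_S.
Qed.

Hypothesis W_bounded : stick_bounded W.

Section Step.
Variables (K : Type) (lt : K -> K -> Prop) (M : nat -> Type).
Hypotheses (lt_tri : forall a b, lt a b \/ a = b \/ lt b a) (K_S : lecard K S)
  (K_classes : forall Y : K -> Prop, lecard nat (elt Y) -> exists n, eqcard (elt Y) (M n)).

Let Iseg t := fun k => lt k t.
Hypothesis Iseg_bounded : forall t, stick_bounded (elt (Iseg t)).

Lemma uncountable_cofinal (y : K -> Prop) :
  ~ lecard (elt y) nat -> (forall t, lecard (elt (restrict (Iseg t) y)) nat) ->
  forall d, exists a, y a /\ lt d a.
Proof.
move=> y_unc y_cnt d; apply: NNPP => y_bounded; apply: y_unc.
apply: lecard_trans (lecard_option_nat (y_cnt d)).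
apply: (lecard_rel (fun u o => match o with
  | Some v => proj1_sig (proj1_sig v) = proj1_sig u | None => proj1_sig u = d end)).
  move=> [k yk]; case: (lt_tri k d) => [kd|[kd|dk]].
  - by exists (Some (exist _ (exist _ k kd) yk)).
  - by exists None.
  - by case: y_bounded; exists k.
by move=> u u' [v|] E1 E2; apply: sig_eq; [rewrite -E1 -E2 | rewrite E1 E2].
Qed.

(* [Z a] is the segment below [a], padded to be infinite so that [K_classes] applies.
   Uncountably many [a] in [y] give [Z a] the same size; they are cofinal, so their [Z a]
   cover [K]. *)
Lemma cofinal_omega1_bound (y : K -> Prop) :
  eqcard (elt y) W -> (forall t, lecard (elt (restrict (Iseg t) y)) nat) ->
  lecard K W \/ exists t, lecard K (elt (Iseg t)).
Proof.
move=> y_W y_cnt; have W_y := eqcard_lecard (eqcard_sym y_W).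
have y_unc : ~ lecard (elt y) nat.
  by move=> y_nat; case: HW => _ [_ [_ [W_unc _]]]; apply: W_unc (lecard_trans W_y y_nat).
have [e e_inj] := lecard_trans (lecard_nat_omega1 W R HW) (lecard_trans W_y (lecard_elt y)).
pose Z a k := lt k a \/ exists m, e m = k.
have Z_classes a : exists n, eqcard (elt (Z a)) (M n).
  apply: K_classes; exists (fun m => exist (Z a) (e m) (or_intror (ex_intro _ m erefl))).
  by move=> m m' [/e_inj].
have [nn Z_nn] := choice _ Z_classes.
have [n y1_unc] := uncountable_fiber y nn y_unc.
pose y1 k := y k /\ nn k = n.
have y1_cof : forall d, exists a, y1 a /\ lt d a.
  apply: uncountable_cofinal y1_unc _ => t; apply: lecard_trans (y_cnt t).
  by apply: lecard_incl => u [].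
have [a0 [_ na0]] := uncountable_inhabited y1 y1_unc.
have Z_a0 : lecard (elt (Z a0)) (elt (Iseg a0) + nat).
  apply: lecard_trans (lecard_cover _ (Iseg a0) (fun k => exists m, e m = k) (fun _ Zk => Zk)) _.
  exact: lecard_sum (lecard_refl _) (lecard_range e).
have Z_bound (i : elt y1) : lecard (elt (Z (proj1_sig i))) (elt (Iseg a0) + nat).
  case: i => a [_ na] /=; apply: lecard_trans (eqcard_lecard (Z_nn a)) _; rewrite na -na0.
  exact: lecard_trans (eqcard_lecard (eqcard_sym (Z_nn a0))) Z_a0.
have K_bound : lecard K (W * (elt (Iseg a0) + nat)).
  have y1_W : lecard (elt y1) W.
    by apply: lecard_trans (eqcard_lecard y_W); apply: lecard_incl => k [].
  apply: lecard_trans (lecard_prod y1_W (lecard_refl _)).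
  apply: (lecard_indexed_cover (fun i k => Z (proj1_sig i) k) (inr 0)) Z_bound => d.
  by have [a [y1a da]] := y1_cof d; exists (exist y1 a y1a); left.
case: (omega1_prod_bound W R HW (elt (Iseg a0))) => bound.
  by left; apply: lecard_trans K_bound bound.
by right; exists a0; apply: lecard_trans K_bound bound.
Qed.

Let nat_S : lecard nat S := lecard_trans (lecard_nat_omega1 W R HW) W_S.

Lemma stick_bounded_step : stick_bounded K.
Proof.
case: (classic (exists y, eqcard (elt y) W /\
  forall t, lecard (elt (restrict (Iseg t) y)) nat)) => [[y [y_W y_cnt]]|no_cofinal].
  case: (cofinal_omega1_bound y y_W y_cnt) => [K_W|[t K_t]].
    exact: stick_bounded_inj K_W W_bounded.
  exact: stick_bounded_inj K_t (Iseg_bounded t).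
pose Fam t := proj1_sig (constructive_indefinite_description _ (Iseg_bounded t)).
have Fam_ok t : stick_family (elt (Iseg t)) W (Fam t) /\ lecard (elt (Fam t)) S.
  exact: proj2_sig (constructive_indefinite_description _ (Iseg_bounded t)).
exists (cover_family Iseg Fam); split.
  apply: stick_family_cover => [t|y y_W]; first exact: (Fam_ok t).1.
  have [t t_unc] : exists t, ~ lecard (elt (restrict (Iseg t) y)) nat.
    apply: NNPP => all_cnt; apply: no_cofinal; exists y; split=> // t.
    by apply: NNPP => t_unc; apply: all_cnt; exists t.
  exists t; apply: (omega1_eq_uncountable W R HW t_unc).
  exact: lecard_trans (lecard_restrict _ y) (eqcard_lecard y_W).
apply: lecard_trans (lecard_cover_family Iseg Fam (fun t => (Fam_ok t).2)) _.
exact: lecard_trans (lecard_prod K_S (lecard_refl S)) (hessenberg _ nat_S).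
Qed.
End Step.

Lemma stick_bounded_well_order (lt : S -> S -> Prop) :
  well_founded lt -> (forall a b, lt a b \/ a = b \/ lt b a) -> below_aleph_omega1 S ->
  stick_bounded S.
Proof.
move=> lt_wf lt_tri [sq sq_classes].
have seg_bounded t : stick_bounded (elt (fun s => lt s t)).
  elim/(well_founded_induction lt_wf): t => t IH.
  apply: (@stick_bounded_step _ (fun u v => lt (proj1_sig u) (proj1_sig v)) (fun n => elt (sq n))).
  - move=> [a ?] [b ?]; case: (lt_tri a b) => [|[ab|]]; auto.
    by right; left; apply: sig_eq.
  - exact: lecard_elt.
  - move=> Y Y_inf; have Y_img := eqcard_img (@proj1_sig _ _) Y (@sig_eq _ _).
    have [n Y_n] := sq_classes _ (lecard_trans Y_inf (eqcard_lecard Y_img)).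
    by exists n; apply: eqcard_trans Y_img Y_n.
  - move=> u; apply: stick_bounded_inj (IH _ (proj2_sig u)).
    exists (fun v => exist (fun s => lt s (proj1_sig u)) (proj1_sig (proj1_sig v)) (proj2_sig v)).
    by move=> v v' [/sig_eq /sig_eq].
exact: (@stick_bounded_step S lt (fun n => elt (sq n))) (lecard_refl S) sq_classes seg_bounded.
Qed.
End Core.

Section StickInequalities.
Variables (W : Type) (R : W -> W -> Prop).
Hypothesis HW : is_omega1 W R.

Lemma stick_ge_omega1 (S : Type) : is_stick W S -> lecard W S.
Proof.
move=> [_ [[X [X_stick X_S]] _]].
exact: lecard_trans (stick_family_omega1_ge W R HW X X_stick) (eqcard_lecard X_S).
Qed.

Lemma stick_le_stick' (S P : Type) : is_stick W S -> is_stick' W P -> lecard S P.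
Proof.
move=> HS [[W_P [X [X_stick X_P]]] _].
exact: lecard_trans (stick_lam_le X HS W_P X_stick) (eqcard_lecard X_P).
Qed.

Lemma stick_lam_mono (L L' S S' : Type) :
  lecard L L' -> is_stick_lam W L S -> is_stick_lam W L' S' -> lecard S S'.
Proof.
move=> L_L' HS [_ [[X [X_stick X_S']] _]].
exact: lecard_trans (stick_lam_le X HS L_L' X_stick) (eqcard_lecard X_S').
Qed.

Lemma stick_le_stick_stick (S T : Type) (HS : is_stick W S) : is_stick_lam W S T -> lecard S T.
Proof. exact: (stick_lam_mono W S S T (stick_ge_omega1 S HS)). Qed.

Lemma stick_stick_le_stick' (S T P : Type) :
  is_stick W S -> is_stick_lam W S T -> is_stick' W P -> lecard T P.
Proof.
move=> HS HT HP; have [[_ [X [X_stick X_P]]] _] := HP.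
exact: lecard_trans (stick_lam_le X HT (stick_le_stick' S P HS HP) X_stick) (eqcard_lecard X_P).
Qed.

Lemma stick_family_of_stick (S : Type) : is_stick W S -> below_aleph_omega1 S ->
  exists X, stick_family S W X /\ eqcard (elt X) S.
Proof.
move=> HS S_small; have W_S := stick_ge_omega1 S HS.
have W_bounded : stick_bounded W S W.
  by case: HS => _ [[X [X_stick X_S]] _]; exists X; split=> //; apply: eqcard_lecard.
have [lt [lt_wf _ lt_tri]] := well_ordering S.
have [X [X_stick X_S]] := stick_bounded_well_order W R S HW W_S W_bounded lt lt_wf lt_tri S_small.
by exists X; split=> //; apply: schroeder_bernstein X_S (stick_lam_le X HS W_S X_stick).
Qed.

Lemma stick_eq_stick' (S P : Type) :
  is_stick W S -> below_aleph_omega1 S -> is_stick' W P -> eqcard S P.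
Proof.
move=> HS S_small HP; have [X [X_stick X_S]] := stick_family_of_stick S HS S_small.
apply: schroeder_bernstein (stick_le_stick' S P HS HP) _.
exact: (proj2 HP) S X (stick_ge_omega1 S HS) X_stick X_S.
Qed.

Lemma stick''_le_stick (S P2 : Type) :
  is_stick W S -> below_aleph_omega1 S -> is_stick'' W P2 -> lecard P2 S.
Proof.
move=> HS S_small [_ P2_min]; have [X [X_stick X_S]] := stick_family_of_stick S HS S_small.
have W_S := stick_ge_omega1 S HS.
exact: P2_min S X W_S (stick_family_mono X W_S X_stick) X_S.
Qed.
End StickInequalities.

Theorem lemma1p1 (W : Type) (R : W -> W -> Prop) (HW : is_omega1 W R) :
  (* (a) stick <= stick' *)
  (forall S P : Type, is_stick W S -> is_stick' W P -> lecard S P) /\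
  (* (b) stick < aleph_{omega_1} -> stick = stick' and stick'' <= stick *)
  (forall S : Type, is_stick W S -> below_aleph_omega1 S ->
     (forall P : Type, is_stick' W P -> eqcard S P) /\
     (forall P2 : Type, is_stick'' W P2 -> lecard P2 S)) /\
  (* (c) lambda <= lambda' -> stick_lambda <= stick_lambda' *)
  (forall (L L' S S' : Type), lecard L L' ->
     is_stick_lam W L S -> is_stick_lam W L' S' -> lecard S S') /\
  (* (d) stick <= stick_stick <= stick' *)
  (forall S T P : Type, is_stick W S -> is_stick_lam W S T -> is_stick' W P ->
     lecard S T /\ lecard T P).
Proof.
split; [|split; [|split]].
- exact: (stick_le_stick' W).
- move=> S HS S_small; split=> [P|P2].
  + exact: (stick_eq_stick' W R HW S P HS S_small).
  + exact: (stick''_le_stick W R HW S P2 HS S_small).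
- exact: (stick_lam_mono W).
- move=> S T P HS HT HP; split.
  + exact: (stick_le_stick_stick W R HW S T HS HT).
  + exact: (stick_stick_le_stick' W S T P HS HT HP).
Qed.
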